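(* Let $\mathbf p$ be an arbitrary pure strategy profile, with associated numbers $(u_i,v_i)_{i\in[m]}$. Let $i^*\in\arg\min_{i\in[m]}\{u_i+v_i\bar q\}$, and for $i\neq j$ let $x_{ij}\in\{0,1\}$ equal $1$ if and only if at least one user selects IP $(s_i,s_j,d)$. Then $\mathbf p$ is a Nash equilibrium if and only if both of the following hold: (i) for all $i\in[m]$ with $u_i>0$: $\bar q(u_i+v_i\bar q)\le u_{i^*}+v_{i^*}\bar q+\bar q+\frac{q\mu}{\phi}$; (ii) for all $i,l\in[m]$ with $x_{il}=1$: $u_l+v_l\bar q\le \min\left\{\bar q(u_i+1+v_i\bar q)-\frac{q\mu}{\phi},\ u_{i^*}+v_{i^*}\bar q+\bar q\right\}$.
   Context: Network model: there are $m\ge 2$ source nodes $s_1,\dots,s_m$ and one destination $d$. Source $s_i$ has a set $N_i$ of $n_i$ users. Each user generates an independent Poisson flow of packets of rate $\phi>0$; each direct link $(s_i,d)$ has service rate $\mu>0$; each sidelink $(s_i,s_j)$ loses packets independently with probability $q\in[0,1]$, and $\bar q=1-q$. Only pure strategies are considered: a user in $N_i$ chooses either the direct path (DP) $(s_i,d)$ or an indirect path (IP) $(s_i,s_j,d)$ for some $j\neq i$. For a pure profile $\mathbf p$, $u_i$ is the number of users of $N_i$ choosing DP and $v_i$ is the number of users of other sources choosing an IP $(s_j,s_i,d)$, $j\neq i$; $T_i=u_i\phi+v_i\bar q\phi$. The loss rate of a user $k\in N_i$ is $LR_k=\phi\frac{T_i}{T_i+\mu}$ if it uses DP, and $LR_k=\phi\left(q+\bar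 q\frac{T_j}{T_j+\mu}\right)$ if it uses IP $(s_i,s_j,d)$ (here $T_i,T_j$ include the user's own traffic). A Nash equilibrium is a pure profile in which no user can strictly decrease its loss rate by unilaterally switching to another route, all other users' routes being fixed. *)

From mathcomp Require Import all_boot all_order all_algebra.
Set Implicit Arguments. Unset Strict Implicit. Unset Printing Implicit Defensive.
Import Order.TTheory GRing.Theory Num.Theory.
Local Open Scope ring_scope.

(* Users form a finite type U; [src k] is the source node
   of user k, so N_i = [set k | src k == i].
   A pure profile assigns to each user k a "relay node" p k : 'I_m:
     p k = src k       means k uses the direct path (s_i, d);
     p k = j <> src k  means k uses the indirect path (s_i, s_j, d). *)

Section Model.
Variables (R : realFieldType) (m : nat) (U : finType) (src : U -> 'I_m).

Definition profile := U -> 'I_m.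

Definition unum (p : profile) (i : 'I_m) : nat :=
  #|[set k : U | (src k == i) && (p k == i)]|.

Definition vnum (p : profile) (i : 'I_m) : nat :=
  #|[set k : U | (src k != i) && (p k == i)]|.

Variables (phi mu q : R).
Definition qbar := 1 - q.

Definition traffic (p : profile) (i : 'I_m) : R :=
  (unum p i)%:R * phi + (vnum p i)%:R * qbar * phi.

Definition loss_rate (p : profile) (k : U) : R :=
  let j := p k in
  if j == src k then phi * (traffic p j / (traffic p j + mu))
  else phi * (q + qbar * (traffic p j / (traffic p j + mu))).

Definition deviate (p : profile) (k : U) (r : 'I_m) : profile :=
  fun k' => if k' == k then r else p k'.

Definition nash_eq (p : profile) : Prop :=
  forall (k : U) (r : 'I_m), loss_rate p k <= loss_rate (deviate p k r) k.

Definition wload (p : profile) (i : 'I_m) : R :=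
  (unum p i)%:R + (vnum p i)%:R * qbar.

Definition xsel (p : profile) (i l : 'I_m) : bool :=
  (i != l) && [exists k : U, (src k == i) && (p k == l)].

End Model.

From mathcomp Require Import all_boot all_order all_algebra.
From mathcomp Require Import ring lra zify.
Import Order.TTheory GRing.Theory Num.Theory.
Set Implicit Arguments. Unset Strict Implicit. Unset Printing Implicit Defensive.
Local Open Scope ring_scope.

(* Write W_j = u_j + v_j qbar.  A user whose traffic goes through node j loses
   phi - phi mu g / (phi W_j + mu), with g = 1 on the direct path and g = qbar
   on an indirect one, and switching to node r adds g to W_r.  Clearing
   denominators turns every unilateral deviation into a linear inequality
   between loads.  For a direct user the most attractive alternative is the
   least loaded node istar, which gives (i); an indirect user must prefer
   neither returning to its direct path (first term of the min in (ii)) nor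
   the least loaded relay (second term). *)

Section LoadInequalities.
Variables (R : realFieldType) (m : nat) (phi mu q : R).
Hypotheses (phi_gt0 : 0 < phi) (mu_ge0 : 0 <= mu) (q_ge0 : 0 <= q) (q_le1 : q <= 1).
Variables (W : 'I_m -> R) (istar : 'I_m).
Hypotheses (W_ge0 : forall j, 0 <= W j) (W_min : forall j, W istar <= W j).

Lemma qbar_ge0 : 0 <= qbar q. Proof. by rewrite subr_ge0. Qed.

Lemma qbar_le1 : qbar q <= 1. Proof. by rewrite lerBlDr lerDl. Qed.

Lemma sidelink_cost_ge0 : 0 <= q * mu / phi.
Proof. by rewrite divr_ge0 ?mulr_ge0 // ltW. Qed.

Lemma mulr_sidelink_cost : phi * (q * mu / phi) = q * mu.
Proof. by rewrite mulrCA divff ?mulr1 // gt_eqF. Qed.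

Lemma direct_deviation_le j r :
  (qbar q * (phi * W j + mu) <= phi * (W r + qbar q) + mu)
  = (qbar q * W j <= W r + qbar q + q * mu / phi).
Proof.
rewrite -[in RHS](ler_pM2l phi_gt0) /qbar.
have := mulr_sidelink_cost; set c := q * mu / phi => cost.
by apply/idP/idP => ?; lra.
Qed.

Lemma return_deviation_le i l :
  (phi * W l + mu <= qbar q * (phi * (W i + 1) + mu))
  = (W l <= qbar q * (W i + 1) - q * mu / phi).
Proof.
rewrite -[in RHS](ler_pM2l phi_gt0) /qbar.
have := mulr_sidelink_cost; set c := q * mu / phi => cost.
by apply/idP/idP => ?; lra.
Qed.

Lemma relay_deviation_le l r :
  (qbar q * (phi * W l + mu) <= qbar q * (phi * (W r + qbar q) + mu))
  = (qbar q == 0) || (W l <= W r + qbar q).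
Proof.
have [->|qbar_neq0] := eqVneq (qbar q) 0; first by rewrite !mul0r lexx.
by rewrite ler_pM2l ?lt_def ?qbar_neq0 ?qbar_ge0 // lerD2r ler_pM2l.
Qed.

Lemma direct_route_stable j :
  (forall r, r != j -> qbar q * (phi * W j + mu) <= phi * (W r + qbar q) + mu)
  <-> qbar q * W j <= W istar + qbar q + q * mu / phi.
Proof.
split=> [stable | le_star r _].
- have [<-|star_neq_j] := eqVneq istar j; last by rewrite -direct_deviation_le stable.
  have := qbar_ge0; have := sidelink_cost_ge0; have := ler_piMl (W_ge0 istar) qbar_le1; lra.
- by rewrite direct_deviation_le; have := W_min r; lra.
Qed.

Lemma indirect_route_stable i l : i != l ->
  (forall r, r != l ->
     (if r == i then 1 else qbar q) * (phi * W l + mu)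
     <= qbar q * (phi * (W r + (if r == i then 1 else qbar q)) + mu))
  <-> W l <= Num.min (qbar q * (W i + 1) - q * mu / phi) (W istar + qbar q).
Proof.
move=> i_neq_l; rewrite le_min; split=> [stable | /andP [le_return le_star] r r_neq_l].
- have le_return : W l <= qbar q * (W i + 1) - q * mu / phi.
    by rewrite -return_deviation_le -[_ + mu]mul1r; have := stable i i_neq_l; rewrite eqxx.
  rewrite le_return /=.
  have [<-|star_neq_l] := eqVneq istar l; first by rewrite lerDl qbar_ge0.
  have [star_eq_i|star_neq_i] := eqVneq istar i.
    move: le_return; rewrite -star_eq_i.
    have := sidelink_cost_ge0; have := ler_piMl (W_ge0 istar) qbar_le1; lra.
  have := stable istar star_neq_l; rewrite (negbTE star_neq_i) relay_deviation_le.
  case/orP=> [/eqP qbar0|//]; move: le_return; rewrite qbar0.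
  have := sidelink_cost_ge0; have := W_ge0 istar; lra.
- have [->|r_neq_i] := eqVneq r i; first by rewrite mul1r return_deviation_le.
  by rewrite relay_deviation_le; apply/orP; right; have := W_min r; lra.
Qed.
End LoadInequalities.

Section Deviation.
Variables (R : realFieldType) (m : nat) (U : finType) (src : U -> 'I_m).
Variables (phi mu q : R).
Hypotheses (phi_gt0 : 0 < phi) (mu_gt0 : 0 < mu) (q_ge0 : 0 <= q) (q_le1 : q <= 1).
Implicit Types (p : profile m U) (k : U) (i j r : 'I_m).

(* Only the fraction qbar of a user's traffic survives the sidelink. *)
Definition load_share k r : R := if r == src k then 1 else qbar q.

Lemma deviate_self p k r : deviate p k r k = r.
Proof. by rewrite /deviate eqxx. Qed.

Lemma card_deviate (P : U -> 'I_m -> bool) p k r :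
  (#|[set k' | P k' (deviate p k r k')]| + P k (p k)
   = #|[set k' | P k' (p k')]| + P k r)%N.
Proof.
rewrite (cardsD1 k [set k' | P k' (deviate p k r k')]) (cardsD1 k [set k' | P k' (p k')]).
have -> : [set k' | P k' (deviate p k r k')] :\ k = [set k' | P k' (p k')] :\ k.
  by apply/setP => x; rewrite !inE /deviate; case: eqP.
rewrite !inE deviate_self; lia.
Qed.

Lemma wload_deviate p k r j :
  wload src q (deviate p k r) j
  = wload src q p j + ((r == j)%:R - (p k == j)%:R) * load_share k j.
Proof.
move: (card_deviate (fun k' x => (src k' == j) && (x == j)) p k r).
move: (card_deviate (fun k' x => (src k' != j) && (x == j)) p k r).
move=> /(congr1 (fun n => n%:R : R)) + /(congr1 (fun n => n%:R : R)).
rewrite !natrD /wload /unum /vnum => /(canRL (addrK _)) -> /(canRL (addrK _)) ->.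
rewrite /load_share [j == _]eq_sym.
by case: (src k == j) (r == j) (p k == j) => [] [] [] /=; ring.
Qed.

Lemma wload_ge0 p j : 0 <= wload src q p j.
Proof. by rewrite addr_ge0 ?mulr_ge0 // subr_ge0. Qed.

Lemma loss_rateE p k : loss_rate src phi mu q p k =
  phi - phi * mu * load_share k (p k) / (phi * wload src q p (p k) + mu).
Proof.
have load_gt0 : 0 < phi * wload src q p (p k) + mu.
  by rewrite ltr_wpDl // mulr_ge0 ?wload_ge0 // ltW.
have traffic_wload : traffic src phi q p (p k) = phi * wload src q p (p k).
  by rewrite /traffic /wload; ring.
rewrite /loss_rate /= traffic_wload /load_share /qbar.
by case: ifP => _; field; rewrite gt_eqF.
Qed.

Lemma load_share_ge0 k r : 0 <= load_share k r.
Proof. by rewrite /load_share; case: ifP; rewrite ?subr_ge0. Qed.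

Lemma ler_loss_ratio g g' a b : 0 <= a -> 0 <= b ->
  (phi - phi * mu * g / (a + mu) <= phi - phi * mu * g' / (b + mu))
  = (g' * (a + mu) <= g * (b + mu)).
Proof.
move=> a_ge0 b_ge0.
have a_mu_gt0 : 0 < a + mu by rewrite ltr_wpDl.
have b_mu_gt0 : 0 < b + mu by rewrite ltr_wpDl.
rewrite lerD2l lerN2 -!mulrA !ler_pM2l // ler_pdivrMr // mulrAC ler_pdivlMr //.
Qed.

Definition best_response p k : Prop :=
  forall r, r != p k ->
    load_share k r * (phi * wload src q p (p k) + mu)
    <= load_share k (p k) * (phi * (wload src q p r + load_share k r) + mu).

Lemma nash_eqP p : nash_eq src phi mu q p <-> forall k, best_response p k.
Proof.
have loss_deviate k r : loss_rate src phi mu q (deviate p k r) k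
    = phi - phi * mu * load_share k r
            / (phi * (wload src q p r + (r != p k)%:R * load_share k r) + mu).
  rewrite loss_rateE deviate_self wload_deviate eqxx [p k == r]eq_sym.
  by case: (r == p k); rewrite /= ?subrr ?subr0.
have phi_wload_ge0 r : 0 <= phi * wload src q p r.
  by rewrite mulr_ge0 ?(ltW phi_gt0) ?wload_ge0.
have phi_load_ge0 k r : 0 <= phi * (wload src q p r + load_share k r).
  by rewrite mulr_ge0 ?(ltW phi_gt0) // addr_ge0 ?wload_ge0 ?load_share_ge0.
split=> [nash k r r_neq | best k r].
  by move: (nash k r); rewrite loss_rateE loss_deviate r_neq mul1r ler_loss_ratio.
have [->|r_neq] := eqVneq r (p k).
  by rewrite loss_deviate eqxx mul0r addr0 -loss_rateE.
by rewrite loss_rateE loss_deviate r_neq mul1r ler_loss_ratio ?best.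
Qed.

Lemma unum_gt0P p i : reflect (exists2 k, src k = i & p k = i) (0 < unum src p i)%N.
Proof.
rewrite /unum card_gt0; apply: (iffP (set0Pn _)) => [[k] | [k ski pki]].
  by rewrite inE => /andP [/eqP ski /eqP pki]; exists k.
by exists k; rewrite inE ski pki !eqxx.
Qed.

Lemma xselP p i l : reflect (exists k, [/\ src k = i, p k = l & i != l]) (xsel src p i l).
Proof.
apply: (iffP andP) => [[i_neq_l /existsP [k /andP [/eqP ski /eqP pkl]]] | [k [ski pkl ?]]].
  by exists k.
by split=> //; apply/existsP; exists k; rewrite ski pkl !eqxx.
Qed.

Section Equilibrium.
Variables (p : profile m U) (istar : 'I_m).
Hypothesis wload_min : forall i, wload src q p istar <= wload src q p i.

Lemma best_response_direct k : p k = src k ->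
  best_response p k <->
  qbar q * wload src q p (src k) <= wload src q p istar + qbar q + q * mu / phi.
Proof.
move=> pk_src.
apply: iff_trans
  (direct_route_stable phi_gt0 (ltW mu_gt0) q_ge0 q_le1 (wload_ge0 p) wload_min _).
rewrite /best_response pk_src /load_share eqxx.
by split=> stable r r_neq; move: (stable r r_neq); rewrite (negbTE r_neq) mul1r.
Qed.

Lemma best_response_indirect k : p k != src k ->
  best_response p k <->
  wload src q p (p k)
  <= Num.min (qbar q * (wload src q p (src k) + 1) - q * mu / phi)
             (wload src q p istar + qbar q).
Proof.
move=> pk_neq; have src_neq : src k != p k by rewrite eq_sym.
apply: iff_trans
  (indirect_route_stable phi_gt0 (ltW mu_gt0) q_ge0 q_le1 (wload_ge0 p) wload_min src_neq).
by rewrite /best_response /load_share (negbTE pk_neq).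
Qed.
End Equilibrium.
End Deviation.

Theorem theorem2 (R : realFieldType) (m : nat) (U : finType) (src : U -> 'I_m)
    (phi mu q : R) (p : profile m U) (istar : 'I_m) :
  (2 <= m)%N -> 0 < phi -> 0 < mu -> 0 <= q -> q <= 1 ->
  (forall i : 'I_m, wload src q p istar <= wload src q p i) ->
  nash_eq src phi mu q p <->
  ((forall i : 'I_m, (0 < unum src p i)%N ->
      qbar q * wload src q p i
        <= wload src q p istar + qbar q + q * mu / phi) /\
   (forall i l : 'I_m, xsel src p i l ->
      wload src q p l
        <= Num.min (qbar q * ((unum src p i)%:R + 1 + (vnum src p i)%:R * qbar q)
                      - q * mu / phi)
                   (wload src q p istar + qbar q))).
Proof.
move=> _ phi_gt0 mu_gt0 q_ge0 q_le1 wload_min.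
have wload_succ i : (unum src p i)%:R + 1 + (vnum src p i)%:R * qbar q = wload src q p i + 1.
  by rewrite addrAC.
have direct := best_response_direct phi_gt0 mu_gt0 q_ge0 q_le1 wload_min.
have indirect := best_response_indirect phi_gt0 mu_gt0 q_ge0 q_le1 wload_min.
rewrite nash_eqP //; split=> [best | [stable_direct stable_indirect] k].
  split=> [i /unum_gt0P [k <- pk_src] | i l /xselP [k [<- <- pk_neq]]].
    exact/direct/best.
  by rewrite wload_succ; apply/indirect/best; rewrite eq_sym.
have [pk_src|pk_neq] := eqVneq (p k) (src k).
  by apply/direct/stable_direct/unum_gt0P => //; exists k.
apply/indirect => //; rewrite -wload_succ; apply: stable_indirect.
by apply/xselP; exists k; rewrite eq_sym.
Qed.
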